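(* Let $c\ge2$ and let $\Gamma$ be a $c$-uniform unoriented hypergraph with $E\neq\varnothing$, strong coloring number $\chi=\chi(\Gamma)$ and smallest normalized Laplacian eigenvalue $\lambda_1$. (1) If $\chi=c$, then $\lambda_1=0$, and $0$ is an eigenvalue of $L$ with multiplicity at least $c-1$. (2) If $\lambda_1=0$, then $\chi=\dfrac{c-\lambda_1}{1-\lambda_1}$ holds if and only if $\chi=c$.
   Context: A hypergraph here is a finite vertex set $V$, $|V|=N$, with an edge set $E\subseteq\mathcal P(V)$. It is $c$-uniform if $|e|=c$ for all $e\in E$, and unoriented means all vertex–edge incidences have orientation $+1$. The degree is $\deg v=|\{e\in E: v\in e\}|$, assumed $\ge1$ for all $v$; $D=\mathrm{diag}(\deg v)$. The adjacency matrix has $A_{v,v}=0$ and, for $v\neq w$, $A_{v,w}=-|\{e\in E: v,w\in e\}|$. The normalized Laplacian is $L=\mathrm{Id}-D^{-1}A$, with real eigenvalues $\lambda_1\le\dots\le\lambda_N$ (for such $\Gamma$ one has $\lambda_N=c$ and $0\le\lambda_1<1$). A proper strong $k$-coloring is a map $V\to\{1,\dots,k\}$ such that any two distinct vertices in a common edge receive different colors; $\chi(\Gamma)$ is the least such $k$. *)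

From HB Require Import structures.
From mathcomp Require Import all_boot all_order all_algebra.
Set Implicit Arguments. Unset Strict Implicit. Unset Printing Implicit Defensive.
Import Order.TTheory GRing.Theory Num.Theory.
Local Open Scope ring_scope.

Section Hyper.
Variable n : nat.
Implicit Types (E : {set {set 'I_n}}).

Definition uniform E (c : nat) : Prop := forall e, e \in E -> #|e| = c.

Definition hdeg E (v : 'I_n) : nat := #|[set e in E | v \in e]|.

Definition hcommon E (v w : 'I_n) : nat := #|[set e in E | (v \in e) && (w \in e)]|.

Variable R : rcfType.

Definition degmx E : 'M[R]_n := diag_mx (\row_i (hdeg E i)%:R).

Definition adjmx E : 'M[R]_n :=
  \matrix_(v, w) (if v == w then 0 else - (hcommon E v w)%:R).

Definition nlap E : 'M[R]_n := 1%:M - invmx (degmx E) *m adjmx E.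

Definition smallest_eigenvalue (M : 'M[R]_n) (lam : R) : Prop :=
  eigenvalue M lam /\ forall mu, eigenvalue M mu -> lam <= mu.

End Hyper.

Definition strong_coloring n (E : {set {set 'I_n}}) k (f : 'I_n -> 'I_k) : Prop :=
  forall e, e \in E -> forall v w, v \in e -> w \in e -> v != w -> f v != f w.

Definition is_strong_chromatic_number n (E : {set {set 'I_n}}) (chi : nat) : Prop :=
  (exists f : 'I_n -> 'I_chi, strong_coloring E f) /\
  (forall k (f : 'I_n -> 'I_k), strong_coloring E f -> (chi <= k)%N).

(* With H the vertex-edge incidence matrix, L = D^-1 H H^T, so the eigenvalues
   of L are those of the positive semidefinite form y |-> \sum_e (\sum_(v in e) y_v)^2
   relative to D, hence nonnegative.  A strong c-colouring of a c-uniform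
   hypergraph makes every edge rainbow, so for any two colours k, k' the row
   vector D (1_k - 1_k') is a left null vector of L.  Fixing one edge e0 and one
   of its vertices v0, the c - 1 vectors attached to the other vertices of e0 are
   independent, and the geometric multiplicity of 0 bounds its algebraic one.
   Part (2) is arithmetic: for lam1 = 0 the formula reads chi = c. *)
From HB Require Import structures.
From mathcomp Require Import all_boot all_order all_algebra.
From mathcomp Require Import ring.
Set Implicit Arguments. Unset Strict Implicit. Unset Printing Implicit Defensive.
Import Order.TTheory GRing.Theory Num.Theory.
Local Open Scope ring_scope.

Section CharPolyMultiplicity.
Variables (F : fieldType) (n : nat).
Implicit Types (L P : 'M[F]_n) (S : {set 'I_n}).

Lemma card_le_mup0_char_poly L P S :
  P \in unitmx -> (forall i j, i \in S -> (P *m L) i j = 0) ->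
  (#|S| <= mup 0 (char_poly L))%N.
Proof.
move=> Pu PL0.
pose Q : 'M[{poly F}]_n := \matrix_(i, j) if i \in S then (P i j)%:P
   else (map_mx polyC P *m char_poly_mx L) i j.
pose d := \row_(i < n) (if i \in S then 'X else 1 : {poly F}).
have PLE : map_mx polyC P *m char_poly_mx L = diag_mx d *m Q.
  apply/matrixP => i j; rewrite mul_diag_mx mxE [d 0 i]mxE [Q i j]mxE.
  case: ifP => iS; last by rewrite mul1r.
  rewrite /char_poly_mx mulmxBr mul_mx_scalar -map_mxM.
  by move: (PL0 i j iS); rewrite !mxE => ->; rewrite subr0 mulrC.
have detE : (\det P)%:P * char_poly L = 'X^#|S| * \det Q.
  rewrite /char_poly -det_map_mx -det_mulmx PLE det_mulmx det_diag.
  congr (_ * _); rewrite (bigID (mem S)) /= [X in _ * X]big1 ?mulr1.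
    by rewrite (eq_bigr (fun=> 'X)) ?prodr_const // => i iS; rewrite mxE iS.
  by move=> i /negPf iS; rewrite mxE iS.
have detP : \det P != 0 by rewrite -unitfE -unitmxE.
rewrite mup_geq ?monic_neq0 ?char_poly_monic // subr0.
by rewrite -(dvdpZr _ _ detP) -mul_polyC detE dvdp_mulr.
Qed.

Lemma eigenvalue_mup_gt0 L a : (0 < mup a (char_poly L))%N -> eigenvalue L a.
Proof.
move=> mup_gt0; rewrite eigenvalue_root_char -dvdp_XsubCl.
by rewrite -(expr1 ('X - a%:P)) -mup_geq ?monic_neq0 ?char_poly_monic.
Qed.

(* After moving the indices of S first, P is block upper triangular with the
   invertible diagonal block diag (P j j)_(j in S) and an identity block. *)
Lemma unitmx_diag_pivots P S :
  (forall i j, i \notin S -> P i j = (i == j)%:R) ->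
  (forall i j, j \in S -> P i j = (i == j)%:R * P j j) ->
  (forall j, j \in S -> P j j != 0) -> P \in unitmx.
Proof.
move=> Prow Pcol Pjj; rewrite -row_free_unit -kermx_eq0; apply/eqP.
suff ker0 (x : 'M[F]_n) : x *m P = 0 -> x = 0 by apply: ker0; exact: mulmx_ker.
move=> /matrixP xP0.
have xS r j : j \in S -> x r j = 0.
  move=> jS; move: (xP0 r j); rewrite !mxE (bigD1 j) //= big1 => [|i ij].
    by rewrite addr0 => /eqP; rewrite mulf_eq0 (negbTE (Pjj j jS)) orbF => /eqP.
  by rewrite Pcol // (negbTE ij) mul0r mulr0.
apply/matrixP => r j; rewrite [RHS]mxE; have [jS|jS] := boolP (j \in S); first exact: xS.
move: (xP0 r j); rewrite !mxE (bigD1 j) //= big1 => [|i ij].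
  by rewrite Prow // eqxx mulr1 addr0.
have [iS|iS] := boolP (i \in S); first by rewrite xS // mul0r.
by rewrite Prow // (negbTE ij) mulr0.
Qed.

End CharPolyMultiplicity.

Section NormalizedLaplacian.
Variables (R : rcfType) (n : nat) (E : {set {set 'I_n}}).
Hypothesis hdeg_gt0 : forall v, (0 < hdeg E v)%N.
Local Notation d v := ((hdeg E v)%:R : R).

Lemma hcommonE v w :
  (hcommon E v w)%:R = \sum_(e in E) ((v \in e)%:R * (w \in e)%:R : R).
Proof.
rewrite /hcommon -sum1_card natr_sum big_mkcond [RHS]big_mkcond /=.
by apply: eq_bigr => e _; rewrite inE; case: (e \in E); case: (v \in e); case: (w \in e);
  rewrite /= ?mulr1 ?mulr0.
Qed.

Lemma hcommon_id v : hcommon E v v = hdeg E v.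
Proof. by apply: eq_card => e; rewrite !inE andbb. Qed.

Lemma hdeg_neq0 v : d v != 0.
Proof. by rewrite pnatr_eq0 -lt0n. Qed.

Lemma invmx_degmx : invmx (degmx R E) = diag_mx (\row_i (d i)^-1).
Proof.
have Du : degmx R E \in unitmx.
  by rewrite unitmxE det_diag unitfE; apply/prodf_neq0 => i _; rewrite mxE hdeg_neq0.
have invD : diag_mx (\row_i (d i)^-1) *m degmx R E = 1%:M.
  apply/matrixP => i j; rewrite mul_diag_mx !mxE.
  case: eqP => [->|_]; last by rewrite mulr0n mulr0.
  by rewrite mulr1n mulVf ?hdeg_neq0.
by rewrite -[RHS]mulmx1 -(mulmxV Du) mulmxA invD mul1mx.
Qed.

Lemma nlapE v w : nlap R E v w = (hcommon E v w)%:R / d v.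
Proof.
rewrite /nlap invmx_degmx mul_diag_mx !mxE.
case: eqP => [->|_]; first by rewrite mulr0 subr0 hcommon_id divff ?hdeg_neq0.
by rewrite sub0r mulrN opprK mulrC.
Qed.

Lemma hcommon_form (y : 'I_n -> R) :
  \sum_j y j * \sum_l y l * (hcommon E l j)%:R =
  \sum_(e in E) (\sum_j y j * (j \in e)%:R) ^+ 2.
Proof.
under eq_bigr => j _ do (rewrite mulr_sumr; under eq_bigr => l _ do
   rewrite hcommonE !mulr_sumr).
rewrite exchange_big /=; under eq_bigr => l _ do rewrite exchange_big /=.
rewrite exchange_big /=; apply: eq_bigr => e _.
rewrite expr2 mulr_suml; apply: eq_bigr => j _; rewrite mulr_sumr.
by apply: eq_bigr => l _; ring.
Qed.

Lemma nlap_eigenvalue_ge0 mu : eigenvalue (nlap R E) mu -> 0 <= mu.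
Proof.
move=> /eigenvalueP [v vL vnz].
pose y l := v 0 l / d l.
have vLE j : \sum_l y l * (hcommon E l j)%:R = mu * v 0 j.
  move/matrixP: vL => /(_ 0 j); rewrite !mxE => <-.
  by apply: eq_bigr => l _; rewrite nlapE /y mulrA mulrAC.
have formE : \sum_j y j * \sum_l y l * (hcommon E l j)%:R =
    mu * \sum_j (v 0 j) ^+ 2 / d j.
  rewrite mulr_sumr; apply: eq_bigr => j _; rewrite vLE /y.
  by field; rewrite hdeg_neq0.
have [j0 vj0] : exists j, v 0 j != 0.
  apply/existsP; rewrite -negb_forall; apply: contra vnz => /forallP v0.
  by apply/eqP/rowP => j; rewrite mxE; apply/eqP.
have norm_gt0 : 0 < \sum_j (v 0 j) ^+ 2 / d j.
  rewrite (bigD1 j0) //=; apply: ltr_wpDr.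
    by apply: sumr_ge0 => j _; rewrite divr_ge0 ?sqr_ge0 ?ler0n.
  by rewrite divr_gt0 ?exprn_even_gt0 ?ltr0n.
have : 0 <= mu * \sum_j (v 0 j) ^+ 2 / d j.
  by rewrite -formE hcommon_form; apply: sumr_ge0 => e _; exact: sqr_ge0.
by rewrite pmulr_lge0.
Qed.

Variables (c : nat) (g : 'I_n -> 'I_c).
Hypothesis E_uniform : uniform E c.
Hypothesis g_col : strong_coloring E g.

Lemma strong_coloring_inj e : e \in E -> {in e &, injective g}.
Proof.
move=> eE v w ve we gvw; apply/eqP; apply: contraT => vw.
by move: (g_col eE ve we vw); rewrite gvw eqxx.
Qed.

Lemma card_colour_class e k : e \in E -> #|[set l in e | g l == k]| = 1%N.
Proof.
move=> eE.
have rainbow : g @: e = setT.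
  apply/eqP; rewrite eqEcard subsetT cardsT card_ord.
  by rewrite card_in_imset ?E_uniform ?leqnn //; exact: strong_coloring_inj.
have : k \in g @: e by rewrite rainbow inE.
case/imsetP => l le ->; rewrite -(cards1 l); apply: eq_card => x.
rewrite !inE; apply/andP/eqP => [[xe /eqP]|->]; last by rewrite le.
exact: (strong_coloring_inj eE xe le).
Qed.

Lemma sum_colour_hcommon k j :
  \sum_l (g l == k)%:R * (hcommon E l j)%:R = d j.
Proof.
rewrite -hcommon_id hcommonE; under eq_bigr => l _ do rewrite hcommonE mulr_sumr.
rewrite exchange_big /=; apply: eq_bigr => e eE.
transitivity ((j \in e)%:R * #|[set l in e | g l == k]|%:R : R).
  rewrite -sum1_card natr_sum mulr_sumr [RHS]big_mkcond /=.
  by apply: eq_bigr => l _; rewrite inE; case: (l \in e); case: (g l == k);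
    rewrite /= ?mulr0 ?mulr1 ?mul0r ?mul1r.
by rewrite card_colour_class // mulr1 -natrM mulnb andbb.
Qed.

Lemma colour_diff_left_kernel k k' :
  \row_l (d l * ((g l == k)%:R - (g l == k')%:R)) *m nlap R E = 0.
Proof.
apply/rowP => j; rewrite !mxE.
transitivity (\sum_l ((g l == k)%:R * (hcommon E l j)%:R
                      - (g l == k')%:R * (hcommon E l j)%:R) : R).
  by apply: eq_bigr => l _; rewrite nlapE mxE; field; rewrite hdeg_neq0.
by rewrite sumrB !sum_colour_hcommon subrr.
Qed.

Lemma mup0_nlap_ge e0 v0 : e0 \in E -> v0 \in e0 ->
  (c.-1 <= mup 0 (char_poly (nlap R E)))%N.
Proof.
move=> e0E v0e0; pose S := e0 :\ v0.
have cardS : #|S| = c.-1 by move: (cardsD1 v0 e0); rewrite v0e0 E_uniform // => ->.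
pose P : 'M[R]_n := \matrix_(i, j)
  if i \in S then d j * ((g j == g i)%:R - (g j == g v0)%:R) else (i == j)%:R.
have gS j : j \in S -> (g j == g v0) = false.
  case/setD1P => jv0 je0; apply/negbTE; apply: contra jv0.
  by move/eqP/(strong_coloring_inj e0E je0 v0e0) ->.
have Pjj j : j \in S -> P j j = d j.
  by move=> jS; rewrite mxE jS eqxx gS // subr0 mulr1.
rewrite -cardS; apply: (card_le_mup0_char_poly (P := P)) => [|i j iS].
  apply: (unitmx_diag_pivots (S := S)) => [i j /negPf iS|i j jS|j jS].
  - by rewrite mxE iS.
  - rewrite Pjj // mxE gS // subr0; have /setD1P [_ je0] := jS.
    case: ifP => [/setD1P [_ ie0]|/negbT iS].
      rewrite [LHS]mulrC (_ : (g j == g i) = (i == j)) // eq_sym.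
      by apply/eqP/eqP => [/(strong_coloring_inj e0E ie0 je0)|->].
    by rewrite (_ : i == j = false) ?mul0r //; apply: contraNF iS => /eqP ->.
  - by rewrite Pjj ?hdeg_neq0.
move/rowP: (colour_diff_left_kernel (g i) (g v0)) => /(_ j); rewrite !mxE.
by apply: eq_trans; apply: eq_bigr => l _; rewrite !mxE iS.
Qed.

End NormalizedLaplacian.

Theorem mainTheorem4 (R : rcfType) (n c : nat) (E : {set {set 'I_n}})
    (chi : nat) (lam1 : R) :
  (2 <= c)%N ->
  uniform E c ->
  E != set0 ->
  (forall v, (0 < hdeg E v)%N) ->
  is_strong_chromatic_number E chi ->
  smallest_eigenvalue (nlap R E) lam1 ->
  (chi = c -> lam1 = 0 /\ (c.-1 <= mup 0 (char_poly (nlap R E)))%N) /\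
  (lam1 = 0 -> (chi%:R = (c%:R - lam1) / (1 - lam1) <-> chi = c)).
Proof.
move=> c_ge2 E_unif E_neq0 hdeg_gt0 [[g g_col] _] [lam1_eig lam1_min].
split=> [chi_c|->]; last first.
  rewrite !subr0 divr1; split=> [/eqP|->] //.
  by rewrite eqr_nat => /eqP.
subst chi; have [e0 e0E] := set0Pn _ E_neq0.
have : (0 < #|e0|)%N by rewrite E_unif // (leq_trans _ c_ge2).
rewrite card_gt0 => /set0Pn [v0 v0e0].
have mup_ge := mup0_nlap_ge R hdeg_gt0 E_unif g_col e0E v0e0.
have eig0 : eigenvalue (nlap R E) 0.
  by apply: eigenvalue_mup_gt0; apply: leq_trans mup_ge; rewrite -ltnS prednK // ltnW.
split=> //; apply/le_anti.
by rewrite lam1_min // (nlap_eigenvalue_ge0 hdeg_gt0 lam1_eig).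
Qed.
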